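(* Let $m\ge1$, let $Y$ be a set of $m$ indices and $(z_i)_{i\in Y}$ pairwise distinct complex numbers, and let $t\in\mathbb{C}$, $\tau\in\mathbb{Z}$ be such that all denominators below are nonzero. Then \[ \sum_{(J,K)}(-1)^{n_D}\prod_{j\in J}\frac{1}{tz_j\omega^{\tau+n_D+1}-1}\prod_{q=1}^{n_D}\frac{\omega^{q-1}}{tz_{k_q}\omega^{\tau+n_D}-1}\prod_{j\in J}\prod_{k\in K}\frac{z_k-z_j\omega}{z_k-z_j}=0, \] where the sum runs over all ordered pairs $(J,K)$ of disjoint subsets with $J\cup K=Y$, $n_D=\#K$, and $K=\{k_1,\ldots,k_{n_D}\}$.
   Context: $\omega$ is a fixed primitive $N$-th root of unity, $N\ge2$. *)

From HB Require Import structures.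
From mathcomp Require Import all_boot all_order all_algebra all_field.
Set Implicit Arguments. Unset Strict Implicit. Unset Printing Implicit Defensive.

From HB Require Import structures.
From mathcomp Require Import all_boot all_order all_algebra all_field.
From mathcomp Require Import ring.
Set Implicit Arguments. Unset Strict Implicit. Unset Printing Implicit Defensive.
Import Order.TTheory GRing.Theory Num.Theory.
Local Open Scope ring_scope.

(* Lemma B.4: an alternating sum over ordered partitions (J, K) of the index
   set vanishes.  The proof writes each summand as a determinant and lets the
   determinants cancel in pairs.

   Let Y = 'I_m with m = p.+1 and lam_n = t w^(tau + n).  For K a subset of Y
   let a^K be the point vector with a^K_j = z_j if j in K, w z_j otherwise,
   and let M(s, a) be the Vandermonde matrix of a whose last row a_j^p is
   divided by 1 - s a_j.  Then
   (1) det M(s, a) * prod_j (1 - s a_j) = det V(a)      [det_res_vdm];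
   (2) det V(a^K) = det V(z) * w^(#pairs in Y\K)
                    * prod_(k in K, j notin K) (z_k - z_j w)/(z_k - z_j)
                                                       [det_vdm_twist];
   so the (Y\K, K) summand equals coef_K * det M(lam_|K|, a^K) for an explicit
   scalar coef_K [summand_coefE].  Finally (3) sum_K coef_K det M(lam_|K|, a^K)
   = 0 [sum_coef_det_eq0]: expanding along the last row, the column-j terms of
   K and K\{j} cancel, because their cofactors agree, lam_|K| z_j =
   lam_(|K|-1) (w z_j), and coef_K = - coef_(K\{j}) * w^p. *)

Section ResolventVandermonde.
Variable F : fieldType.

Definition res_vdm (p : nat) (s : F) (a : 'rV[F]_p.+1) : 'M[F]_p.+1 :=
  \matrix_(i, j) (a 0 j ^+ i * (if i == ord_max then (1 - s * a 0 j)^-1 else 1)).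

(* Multiplying column j of res_vdm by 1 - s a_j yields, up to the unipotent
   row operations "row i minus s times row i+1", the Vandermonde matrix. *)
Lemma det_res_vdm (p : nat) (s : F) (a : 'rV[F]_p.+1) :
  (forall j, 1 - s * a 0 j != 0) ->
  \det (res_vdm s a) * \prod_j (1 - s * a 0 j) = \det (Vandermonde p.+1 a).
Proof.
move=> ha.
pose U : 'M[F]_p.+1 := 1 - s *: \matrix_(i, j) ((i.+1 == j :> nat)%:R).
have detU : \det U = 1.
  rewrite -det_tr det_trig.
    by rewrite big1 // => i _; rewrite !mxE eqxx /= gtn_eqF // mulr0 subr0.
  apply/is_trig_mxP => i j lt_ij; rewrite !mxE.
  have -> : (j == i) = false by apply/eqP => h; move: lt_ij; rewrite h ltnn.
  by rewrite gtn_eqF ?mulr0 ?subrr // ltnS ltnW.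
have UV : res_vdm s a *m diag_mx (\row_j (1 - s * a 0 j)) = U *m Vandermonde p.+1 a.
  rewrite mulmxBl mul1mx -scalemxAl.
  apply/matrixP => i j; rewrite mul_mx_diag !mxE.
  under eq_bigr do rewrite !mxE.
  case: eqP => [->|/eqP ni].
    rewrite divfK ?ha // big1 ?mulr0 ?subr0 // => k _.
    by rewrite gtn_eqF ?mul0r.
  have lti : (i.+1 < p.+1)%N.
    rewrite ltnS ltn_neqAle -ltnS ltn_ord andbT.
    by apply: contra ni => /eqP h; apply/eqP/val_inj.
  rewrite (bigD1 (Ordinal lti)) //= eqxx mul1r big1 ?addr0.
    by rewrite mulr1 exprS mulrBr mulr1 mulrA [a 0 j ^+ i * _]mulrC.
  move=> k nk; rewrite eq_sym (_ : (k == i.+1 :> nat) = false) ?mul0r //.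
  by apply/negbTE; apply: contra nk => /eqP h; apply/eqP/val_inj.
have := congr1 determinant UV.
by rewrite !det_mulmx detU mul1r det_diag; under eq_bigr do rewrite mxE.
Qed.

Lemma cofactor_res_vdm (p : nat) (s s' : F) (a a' : 'rV[F]_p.+1) (j : 'I_p.+1) :
  (forall k, k != j -> a 0 k = a' 0 k) ->
  cofactor (res_vdm s a) ord_max j = cofactor (res_vdm s' a') ord_max j.
Proof.
move=> eq_a; rewrite /cofactor; congr (_ * \det _); apply/matrixP => x y.
rewrite !mxE [lift _ _ == _]eq_sym (negbTE (neq_lift _ _)) eq_a // eq_sym.
exact: neq_lift.
Qed.

End ResolventVandermonde.

Section TwistedVandermonde.
Variables (R : comPzRingType) (n : nat).

Definition pair_pow (w : R) (J : {set 'I_n}) : R :=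
  \prod_(i < n) \prod_(j < n | (i < j)%N) (if (i \in J) && (j \in J) then w else 1).

Lemma prod_pairs_cross (G : 'I_n -> 'I_n -> R) (K : {set 'I_n}) :
  \prod_(i < n) \prod_(j < n | (i < j)%N)
     ((if (i \in K) && (j \notin K) then G i j else 1)
      * (if (i \notin K) && (j \in K) then G j i else 1))
  = \prod_(k in K) \prod_(j in ~: K) G k j.
Proof.
rewrite [LHS](eq_bigr _ (fun i _ => big_split _ _ _ _ _)) /= big_split /=.
rewrite [X in _ * X](exchange_big_dep predT) //= -big_split /= big_mkcond /=.
rewrite [RHS]big_mkcond /=; apply: eq_bigr => i _.
case iK: (i \in K) => /=; last by rewrite !big1 ?mulr1 // => j _; rewrite ?andbF.
rewrite [RHS](bigID (fun j : 'I_n => (i < j)%N)) /=; congr (_ * _).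
  rewrite big_mkcond [RHS]big_mkcond /=; apply: eq_bigr => j _.
  by rewrite in_setC; case: (j \in K); case: (i < j)%N.
rewrite big_mkcond [RHS]big_mkcond /=; apply: eq_bigr => j _.
case: (ltngtP i j) => ij /=; first by rewrite andbF.
  by rewrite in_setC.
have -> : j = i by apply: val_inj.
by rewrite in_setC iK.
Qed.

(* Adding a new point j0 to J creates #|J| new pairs. *)
Lemma pair_pow_setU1 (w : R) (J : {set 'I_n}) (j0 : 'I_n) :
  j0 \notin J -> pair_pow w (j0 |: J) = pair_pow w J * w ^+ #|J|.
Proof.
move=> j0J.
have -> : w ^+ #|J| =
    \prod_(k in [set j0]) \prod_(j in ~: [set j0]) (if j \in J then w else 1).
  rewrite big_set1 -big_mkcondr /= -prodr_const; apply: eq_bigl => j.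
  by rewrite !in_setC !in_set1; case: eqP => // ->; exact/negbTE.
rewrite -prod_pairs_cross /pair_pow -big_split /=; apply: eq_bigr => i _.
rewrite -big_split /=; apply: eq_bigr => j.
rewrite !in_setU1 !in_set1.
case: (eqVneq i j0) => [->|ni]; case: (eqVneq j j0) => [->|nj] /=.
- by rewrite ltnn.
- by rewrite (negbTE j0J) /= => _; case: (j \in J); rewrite ?mulr1 ?mul1r.
- by rewrite (negbTE j0J) andbF /= => _; case: (i \in J); rewrite ?mulr1 ?mul1r.
- by rewrite !mulr1.
Qed.

End TwistedVandermonde.

Section TwistedVandermondeField.
Variables (F : fieldType) (n : nat) (z : 'I_n -> F) (w : F).
Hypothesis z_inj : injective z.

Definition twist (K : {set 'I_n}) : 'rV[F]_n :=
  \row_j (if j \in K then z j else w * z j).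

Definition cross_ratio (k j : 'I_n) : F := (z k - z j * w) / (z k - z j).

(* Vandermonde determinant of the twisted points, factor (a_j - a_i) by
   factor: pairs inside the complement of K contribute a factor w, pairs
   across K and its complement a cross ratio. *)
Lemma det_vdm_twist (K : {set 'I_n}) :
  \det (Vandermonde n (twist K)) =
  \det (Vandermonde n (\row_j z j)) * pair_pow w (~: K)
  * \prod_(k in K) \prod_(j in ~: K) cross_ratio k j.
Proof.
rewrite !det_Vandermonde -prod_pairs_cross /pair_pow -big_split /= -big_split /=.
apply: eq_bigr => i _; rewrite -big_split /= -big_split /=.
apply: eq_bigr => j ij; rewrite !mxE !in_setC.
have zij : z i - z j != 0.
  by rewrite subr_eq0; apply/eqP => /z_inj eij; move: ij; rewrite eij ltnn.
have zji : z j - z i != 0 by rewrite -opprB oppr_eq0.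
rewrite /cross_ratio; case: (i \in K); case: (j \in K) => /=.
- by rewrite !mulr1.
- rewrite !mulr1 -(opprB (z i) (z j)) mulNr.
  by rewrite [_ * (_ / _)]mulrC divfK // opprB mulrC.
- by rewrite !mulr1 !mul1r [RHS]mulrC divfK // [w * _]mulrC.
- by rewrite !mulr1 mulrBl mulrC [z i * w]mulrC.
Qed.

Lemma pair_pow_neq0 (J : {set 'I_n}) : w != 0 -> pair_pow w J != 0.
Proof.
move=> w_neq0; apply/prodf_neq0 => i _; apply/prodf_neq0 => j _.
by case: ifP => _ //; exact: oner_neq0.
Qed.

Lemma det_vdm_neq0 : \det (Vandermonde n (\row_j z j)) != 0.
Proof.
rewrite det_Vandermonde; apply/prodf_neq0 => i _; apply/prodf_neq0 => j ij.
by rewrite !mxE subr_eq0; apply/eqP => /z_inj eij; move: ij; rewrite eij ltnn.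
Qed.

Lemma prod_twist_split (s : F) (K : {set 'I_n}) :
  \prod_j (1 - s * twist K 0 j)
  = \prod_(k in K) (1 - s * z k) * \prod_(j in ~: K) (1 - s * (w * z j)).
Proof.
rewrite (bigID (fun j => j \in K)) /=; congr (_ * _).
  by apply: eq_bigr => j jK; rewrite mxE jK.
apply: eq_big => [j|j jK]; first by rewrite in_setC.
by rewrite mxE (negbTE jK).
Qed.

End TwistedVandermondeField.

Lemma sum_toggle_eq0 (T : finType) (V : zmodType) (j : T) (f : {set T} -> V) :
  (forall K : {set T}, j \in K -> f K + f (K :\ j) = 0) -> \sum_(K : {set T}) f K = 0.
Proof.
move=> f_cancel.
pose toggle (K : {set T}) := if j \in K then K :\ j else j |: K.
have toggleK : involutive toggle.
  move=> K; rewrite /toggle; case jK: (j \in K).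
    by rewrite setD11 setD1K.
  by rewrite setU11 setU1K ?jK.
rewrite (bigID (fun K : {set T} => j \in K)) /=.
rewrite [X in _ + X](reindex_inj (inv_inj toggleK)) /=.
rewrite [X in _ + X](eq_bigl (fun K : {set T} => j \in K)); last first.
  by move=> K; rewrite /toggle; case: ifP; rewrite ?setD11 ?setU11.
rewrite -big_split /=; apply: big1 => K jK.
by rewrite /toggle jK f_cancel.
Qed.

Section AlternatingSum.
Variables (F : fieldType) (p : nat) (z : 'I_p.+1 -> F) (w t : F) (tau : int).
Hypothesis w_neq0 : w != 0.

Definition lam (k : nat) : F := t * w ^ (tau + k%:Z).

Definition geom_pow (k : nat) : F := \prod_(q < k) w ^+ q.

(* The scalar turning det M(lam_|K|, a^K) into the (~: K, K) summand. *)
Definition coef (K : {set 'I_p.+1}) : F :=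
  (-1) ^+ #|~: K| * geom_pow #|K|
  / (\det (Vandermonde p.+1 (\row_j z j)) * pair_pow w (~: K)).

Definition res_mx (K : {set 'I_p.+1}) : 'M[F]_p.+1 := res_vdm (lam #|K|) (twist z w K).

(* lam_(k+1) z = lam_k (w z): moving j out of K trades a factor w in lam
   for the factor w in the twisted point. *)
Lemma lam_succ (k : nat) (x : F) : lam k.+1 * x = lam k * (w * x).
Proof.
have w1 : w ^ (Posz 1) = w by [].
rewrite /lam -addn1 PoszD addrA [w ^ (_ + _ + _)]expfzDr // w1.
by rewrite -!mulrA; congr (_ * _); rewrite mulrCA.
Qed.

Lemma res_mx_setD1 (K : {set 'I_p.+1}) (j : 'I_p.+1) : j \in K ->
  res_mx (K :\ j) ord_max j = w ^+ p * res_mx K ord_max j.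
Proof.
move=> jK; rewrite !mxE !eqxx setD11 jK (cardsD1 j K) jK add1n lam_succ.
by rewrite exprMn -mulrA.
Qed.

(* Removing j from K changes the sign of the coefficient and divides it by
   w^p = w^(|K| - 1) * w^(#|~: K|). *)
Lemma coef_setD1 (K : {set 'I_p.+1}) (j : 'I_p.+1) : j \in K ->
  coef K = - coef (K :\ j) * w ^+ p.
Proof.
move=> jK.
have compl : ~: (K :\ j) = j |: ~: K.
  by apply/setP => x; rewrite !inE; case: (x == j).
have jCK : j \notin ~: K by rewrite in_setC jK.
have cardK : #|K| = #|K :\ j|.+1 by rewrite (cardsD1 j K) jK.
have -> : w ^+ p = w ^+ #|K :\ j| * w ^+ #|~: K|.
  have := cardsC K; rewrite card_ord cardK addSn => -[sizes].
  by rewrite -exprD sizes.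
rewrite /coef compl (pair_pow_setU1 _ jCK) cardsU1 jCK cardK /geom_pow.
rewrite big_ord_recr /= add1n exprS !invfM.
set V := (\det _)^-1; set Q := (pair_pow w _)^-1.
by field; rewrite expf_neq0.
Qed.

Definition laplace_term (K : {set 'I_p.+1}) (j : 'I_p.+1) : F :=
  coef K * (res_mx K ord_max j * cofactor (res_mx K) ord_max j).

Lemma laplace_terms_cancel (K : {set 'I_p.+1}) (j : 'I_p.+1) : j \in K ->
  laplace_term K j + laplace_term (K :\ j) j = 0.
Proof.
move=> jK; rewrite /laplace_term.
have -> : cofactor (res_mx (K :\ j)) ord_max j = cofactor (res_mx K) ord_max j.
  by apply: cofactor_res_vdm => k nk; rewrite !mxE in_setD1 nk.
rewrite res_mx_setD1 // (coef_setD1 jK).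
ring.
Qed.

(* Step (3): expand every determinant along its last row and pair K with
   K \ {j} column by column. *)
Lemma sum_coef_det_eq0 : \sum_(K : {set 'I_p.+1}) coef K * \det (res_mx K) = 0.
Proof.
transitivity (\sum_j \sum_(K : {set 'I_p.+1}) laplace_term K j).
  rewrite exchange_big; apply: eq_bigr => K _.
  by rewrite (expand_det_row _ ord_max) mulr_sumr.
apply: big1 => j _; apply: (sum_toggle_eq0 (f := laplace_term^~ j)).
by move=> K; exact: laplace_terms_cancel.
Qed.

End AlternatingSum.

Lemma ordered_partitionE (T : finType) (J K : {set T}) :
  [disjoint J & K] && (J :|: K == [set: T]) = (J == ~: K).
Proof.
apply/andP/eqP => [[JK_disj /eqP JK_cover]|->].
  apply/setP => x; rewrite in_setC; case xK: (x \in K) => /=.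
    exact: (disjointFl JK_disj xK).
  by have := in_setT x; rewrite -JK_cover in_setU xK orbF.
split; first by rewrite disjoints_subset.
by apply/eqP/setP => x; rewrite !inE; case: (x \in K).
Qed.

Lemma sum_ordered_partitions (V : nmodType) (T : finType) (f : {set T} * {set T} -> V) :
  \sum_(JK : {set T} * {set T} | [disjoint JK.1 & JK.2] && (JK.1 :|: JK.2 == [set: T]))
    f JK
  = \sum_(K : {set T}) f (~: K, K).
Proof.
rewrite (eq_bigl (fun JK : {set T} * {set T} => JK.1 == ~: JK.2)); last first.
  by move=> [J K]; rewrite ordered_partitionE.
rewrite big_mkcond /=.
transitivity (\sum_(J : {set T}) \sum_(K : {set T}) (if J == ~: K then f (J, K) else 0)).
  by rewrite pair_big /=; apply: eq_bigr => -[J K].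
rewrite exchange_big /=; apply: eq_bigr => K _.
by rewrite -big_mkcond big_pred1_eq.
Qed.

Section Summand.
Variable F : fieldType.

Lemma prod_inv_subr1 (I : finType) (A : {set I}) (x : I -> F) :
  \prod_(j in A) (x j - 1)^-1 = (-1) ^+ #|A| * (\prod_(j in A) (1 - x j))^-1.
Proof. by under eq_bigr do rewrite -opprB invrN; rewrite prodrN prodfV. Qed.

Lemma prod_enum_div (I : finType) (K : {set I}) (w : F) (d : I -> F) :
  \prod_(q < #|K|) (w ^+ q / d (enum_val q))
  = geom_pow w #|K| * (\prod_(k in K) d k)^-1.
Proof. by rewrite big_split /= -(big_enum_val (fun k => (d k)^-1)) prodfV. Qed.

Variables (p : nat) (z : 'I_p.+1 -> F) (w t : F) (tau : int).
Hypotheses (z_inj : injective z) (w_neq0 : w != 0).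

Lemma summand_coefE (K : {set 'I_p.+1}) :
  (forall j, j \notin K -> t * z j * w ^ (tau + (#|K|)%:Z + 1) - 1 != 0) ->
  (forall k, k \in K -> t * z k * w ^ (tau + (#|K|)%:Z) - 1 != 0) ->
  (-1) ^+ #|K|
  * (\prod_(j in ~: K) (t * z j * w ^ (tau + (#|K|)%:Z + 1) - 1)^-1)
  * (\prod_(q < #|K|) (w ^+ q / (t * z (enum_val q) * w ^ (tau + (#|K|)%:Z) - 1)))
  * (\prod_(j in ~: K) \prod_(k in K) ((z k - z j * w) / (z k - z j)))
  = coef z w K * \det (res_mx z w t tau K).
Proof.
move=> out_neq0 in_neq0.
set s := lam w t tau #|K|.
have s_in (k : 'I_p.+1) : t * z k * w ^ (tau + (#|K|)%:Z) = s * z k.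
  by rewrite mulrAC.
have s_out (j : 'I_p.+1) : t * z j * w ^ (tau + (#|K|)%:Z + 1) = s * (w * z j).
  by rewrite /s -lam_succ // /lam mulrAC -addrA -PoszD addn1.
have denom_neq0 (j : 'I_p.+1) : 1 - s * twist z w K 0 j != 0.
  rewrite mxE -opprB oppr_eq0; case: ifP => jK; first by rewrite -s_in in_neq0.
  by rewrite -s_out out_neq0 ?jK.
have det_res : \det (res_mx z w t tau K)
    = \det (Vandermonde p.+1 (twist z w K)) / \prod_j (1 - s * twist z w K 0 j).
  by rewrite -(det_res_vdm denom_neq0) mulfK //; apply/prodf_neq0.
rewrite det_res det_vdm_twist // prod_twist_split.
rewrite (prod_enum_div K w (fun k => t * z k * w ^ (tau + (#|K|)%:Z) - 1)) -prodfV /=.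
under eq_bigr do rewrite s_out; under [in X in _ * X * _]eq_bigr do rewrite s_in.
rewrite !prod_inv_subr1 [\prod_(j in ~: K) \prod_(k in K) _]exchange_big /= /coef.
have in_prod_neq0 : \prod_(k in K) (1 - s * z k) != 0.
  by apply/prodf_neq0 => k kK; rewrite -opprB oppr_eq0 -s_in in_neq0.
have out_prod_neq0 : \prod_(j in ~: K) (1 - s * (w * z j)) != 0.
  by apply/prodf_neq0 => j; rewrite in_setC => jK; rewrite -opprB oppr_eq0 -s_out out_neq0.
have sign_sq (x : F) : x = (-1) ^+ #|K| * (-1) ^+ #|K| * x.
  by rewrite -exprMn mulrNN mulr1 expr1n mul1r.
rewrite [RHS]sign_sq /cross_ratio.
field.
by rewrite in_prod_neq0 out_prod_neq0 det_vdm_neq0 // pair_pow_neq0.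
Qed.

End Summand.

(* C : numClosedFieldType plays the role of the complex numbers (e.g. algC). *)
Theorem lemmaB4 (C : numClosedFieldType) (N : nat) (w : C)
  (hN : (2 <= N)%N) (hw : N.-primitive_root w)
  (m : nat) (hm : (1 <= m)%N) (z : 'I_m -> C) (hz : injective z)
  (t : C) (tau : int)
  (hJ : forall (K : {set 'I_m}) (j : 'I_m), j \notin K ->
          t * z j * w ^ (tau + (#|K|)%:Z + 1) - 1 != 0)
  (hK : forall (K : {set 'I_m}) (k : 'I_m), k \in K ->
          t * z k * w ^ (tau + (#|K|)%:Z) - 1 != 0) :
  \sum_(JK : {set 'I_m} * {set 'I_m} |
          [disjoint JK.1 & JK.2] && (JK.1 :|: JK.2 == [set: 'I_m]))
    ((-1) ^+ #|JK.2|
     * (\prod_(j in JK.1) (t * z j * w ^ (tau + (#|JK.2|)%:Z + 1) - 1)^-1)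
     * (\prod_(q < #|JK.2|)
          (w ^+ q / (t * z (enum_val q) * w ^ (tau + (#|JK.2|)%:Z) - 1)))
     * (\prod_(j in JK.1) \prod_(k in JK.2)
          ((z k - z j * w) / (z k - z j)))) = 0.
Proof.
case: m hm z hz hJ hK => [//|p] _ z hz hJ hK.
have w_neq0 : w != 0 by rewrite (prim_root_eq0 hw) -lt0n (prim_order_gt0 hw).
rewrite sum_ordered_partitions /= -[RHS](sum_coef_det_eq0 z t tau w_neq0).
apply: eq_bigr => K _.
by apply: summand_coefE => // [j|k]; [exact: hJ | exact: hK].
Qed.
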